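(* Suppose $T$ has geometric elimination of imaginaries. For each $e\in\mathbb M^{eq}$ choose a geometric canonical parameter $g(e)$ for $e$, with $g(a)=a$ for real $a\in\mathbb M$, and for $A\subset\mathbb M^{eq}$ put $g(A)=\bigcup\{g(e):e\in A\}$. Then: (a) for all $A,B,C\subset\mathbb M^{eq}$, $A\mathop{\downarrow}^a_C B$ holds in $\mathbb M^{eq}$ if and only if $g(A)\mathop{\downarrow}^a_{g(C)}g(B)$ holds in $\mathbb M$; (b) $T$ is modular if and only if $T^{eq}$ is modular.
   Context: A geometric canonical parameter for $e\in\mathbb M^{eq}$ is a finite real tuple $c$ with $c\in\operatorname{acl}^{eq}(e)$ and $e\in\operatorname{acl}^{eq}(c)$; $T$ has geometric elimination of imaginaries if every imaginary has one. In $\mathbb M$: $A\mathop{\downarrow}^a_C B$ iff $\operatorname{acl}(AC)\cap\operatorname{acl}(BC)=\operatorname{acl}(C)$; in $\mathbb M^{eq}$ the same with $\operatorname{acl}^{eq}$. $T$ (resp. $T^{eq}$) is modular if $\mathop{\downarrow}^a$ in $\mathbb M$ (resp. $\mathbb M^{eq}$) satisfies base monotonicity: for $D\subseteq C\subseteq B$, $A\mathop{\downarrow}^a_D B$ implies $A\mathop{\downarrow}^a_C B$. *)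

From mathcomp Require Import all_boot.
From Stdlib Require List FunctionalExtensionality.

Set Implicit Arguments.
Unset Strict Implicit.
Unset Printing Implicit Defensive.

Record language := Language {
  fsym : Type; farity : fsym -> nat;   (* constants = 0-ary functions *)
  rsym : Type; rarity : rsym -> nat }.

Record structure (L : language) := Structure {
  carrier :> Type;
  funI : forall f : fsym L, ('I_(farity f) -> carrier) -> carrier;
  relI : forall r : rsym L, ('I_(rarity r) -> carrier) -> Prop }.

Inductive term (L : language) : Type :=
| Var : nat -> term L
| App : forall f : fsym L, ('I_(farity f) -> term L) -> term L.

Inductive formula (L : language) : Type :=
| FEq : term L -> term L -> formula L
| FRel : forall r : rsym L, ('I_(rarity r) -> term L) -> formula L
| FBot : formula L
| FNot : formula L -> formula L
| FAnd : formula L -> formula L -> formula L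
| FOr : formula L -> formula L -> formula L
| FImp : formula L -> formula L -> formula L
| FEx : nat -> formula L -> formula L
| FAll : nat -> formula L -> formula L.

Section Semantics.
Variables (L : language) (M : structure L).

Definition upd (v : nat -> M) (x : nat) (m : M) : nat -> M :=
  fun i => if i == x then m else v i.

Fixpoint eval (v : nat -> M) (t : term L) : M :=
  match t with
  | Var i => v i
  | App f ts => @funI L M f (fun j => eval v (ts j))
  end.

Fixpoint sat (v : nat -> M) (phi : formula L) : Prop :=
  match phi with
  | FEq t1 t2 => eval v t1 = eval v t2
  | FRel r ts => @relI L M r (fun j => eval v (ts j))
  | FBot => False
  | FNot p => ~ sat v p
  | FAnd p q => sat v p /\ sat v q
  | FOr p q => sat v p \/ sat v q
  | FImp p q => sat v p -> sat v q
  | FEx x p => exists m, sat (upd v x m) p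
  | FAll x p => forall m, sat (upd v x m) p
  end.

(** [tval x o v] : the valuation that places the tuple [x] in the
    variables [o, ..., o+n-1] and agrees with [v] elsewhere. *)
Definition tval (n : nat) (x : 'I_n -> M) (o : nat) (v : nat -> M) : nat -> M :=
  fun i => if o <= i then
             match @insub nat (fun k => k < n) 'I_n (i - o) with
             | Some j => x j | None => v i end
           else v i.

Definition finite_set (T : Type) (X : T -> Prop) : Prop :=
  exists l : list T, forall x, X x -> List.In x l.

Definition def_real (A : M -> Prop) (X : M -> Prop) : Prop :=
  exists (phi : formula L) (k : nat) (p : 'I_k -> M) (o : 'I_k -> nat),
    (forall i, A (p i)) /\
    forall a, X a <-> exists v : nat -> M,
        v 0 = a /\ (forall i, v (o i) = p i) /\ sat v phi.

Definition acl (A : M -> Prop) (a : M) : Prop :=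
  exists X, def_real A X /\ X a /\ finite_set X.

(** A sort of M^eq: an equivalence relation on M^n which is
    0-definable in M. *)
Record eqsort := EqSort {
  es_n : nat;
  es_E : ('I_es_n -> M) -> ('I_es_n -> M) -> Prop;
  es_def : exists phi : formula L, forall x y v,
      es_E x y <-> sat (tval x 0 (tval y es_n v)) phi;
  es_refl : forall x, es_E x x;
  es_sym : forall x y, es_E x y -> es_E y x;
  es_trans : forall x y z, es_E x y -> es_E y z -> es_E x z }.

Definition Meq : Type :=
  { s : eqsort & { c : ('I_(es_n s) -> M) -> Prop |
                   exists x, forall y, c y <-> es_E x y } }.

Definition sort_of (e : Meq) : eqsort := projT1 e.

Definition cls (s : eqsort) (x : 'I_(es_n s) -> M) : Meq :=
  existT _ s (exist _ (es_E x) (ex_intro _ x (fun y => conj id id))).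

Definition home_sort : eqsort.
Proof.
refine (@EqSort 1 (fun x y => x = y) _ _ _ _).
- exists (FEq (Var L 0) (Var L 1)) => x y v /=.
  have h0 : tval x 0 (tval y 1 v) 0 = x ord0.
    rewrite /tval /= insubT //=; congr x; exact/val_inj.
  have h1 : tval x 0 (tval y 1 v) 1 = y ord0.
    rewrite /tval /= insubF //= insubT //=; congr y; exact/val_inj.
  rewrite h0 h1; split=> [-> //|h].
  apply: FunctionalExtensionality.functional_extensionality => i.
  by rewrite (ord1 i).
- by [].
- by move=> ??->.
- by move=> ???->->.
Defined.

Definition real (a : M) : Meq := @cls home_sort (fun _ => a).

Definition rep_at (v : nat -> M) (o : nat) (e : Meq) : Prop :=
  @cls (sort_of e) (fun i => v (o + i)) = e.

(** [X] (a set of elements of sort [s]) is definable in M^eq with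
    parameters from [A] (M^eq carrying the full structure induced from M,
    i.e. its 0-definable relations are those whose preimage in M is
    0-definable). *)
Definition def_eq (A : Meq -> Prop) (s : eqsort) (X : Meq -> Prop) : Prop :=
  exists (phi : formula L) (k : nat) (p : 'I_k -> Meq) (o : 'I_k -> nat),
    (forall i, A (p i)) /\
    forall e, X e <-> (sort_of e = s /\
       exists v : nat -> M,
         rep_at v 0 e /\ (forall i, rep_at v (o i) (p i)) /\ sat v phi).

Definition acleq (A : Meq -> Prop) (e : Meq) : Prop :=
  exists X, def_eq A (sort_of e) X /\ X e /\ finite_set X.

Definition union (T : Type) (A B : T -> Prop) : T -> Prop := fun x => A x \/ B x.

Definition indep_real (A B C : M -> Prop) : Prop :=
  forall x, (acl (union A C) x /\ acl (union B C) x) <-> acl C x.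

Definition indep_eq (A B C : Meq -> Prop) : Prop :=
  forall x, (acleq (union A C) x /\ acleq (union B C) x) <-> acleq C x.

Definition modular_real : Prop :=
  forall A B C D : M -> Prop,
    (forall x, D x -> C x) -> (forall x, C x -> B x) ->
    indep_real A B D -> indep_real A B C.

Definition modular_eq : Prop :=
  forall A B C D : Meq -> Prop,
    (forall x, D x -> C x) -> (forall x, C x -> B x) ->
    indep_eq A B D -> indep_eq A B C.

Definition geom_can_param (c : list M) (e : Meq) : Prop :=
  (forall a, List.In a c -> acleq (fun f => f = e) (real a)) /\
  acleq (fun f => exists a, List.In a c /\ f = real a) e.

Definition geom_EI : Prop := forall e : Meq, exists c, geom_can_param c e.

Definition gimg (g : Meq -> list M) (A : Meq -> Prop) : M -> Prop :=
  fun a => exists e, A e /\ List.In a (g e).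

End Semantics.

(* The key point is that every imaginary [e] is interalgebraic with the real
   tuple [g e]: hence [acl^eq D] coincides with [acl^eq] of the real elements
   of [g D], an imaginary [e] lies in it iff all of [g e] does, and on real
   elements [acl^eq] restricted to real parameters is [acl].  Part (a) then
   follows by comparing both sides elementwise, and (b) from (a), since [g]
   preserves inclusions and maps each set of real elements onto itself.

   The substantial ingredient is the transitivity of [acl^eq].  If [x] lies in
   a set [X_p] defined over [A, p] with at most [N] elements, and [p] in a
   finite set [Y] defined over [A], then [x] lies in the set [Z] of all
   elements of [X_{p'}], for [p'] in [Y] with [X_{p'}] of size at most [N]:
   [Z] is defined over [A] and has at most [N * |Y|] elements. *)

From Pilot Require Import Defs.
From mathcomp Require Import all_boot zify.
From Stdlib Require Import Eqdep ProofIrrelevance ClassicalEpsilon Classical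
  FunctionalExtensionality PropExtensionality.

Set Implicit Arguments.
Unset Strict Implicit.
Unset Printing Implicit Defensive.

Lemma In_mem (T : eqType) (x : T) (l : seq T) : List.In x l <-> x \in l.
Proof.
elim: l => [|y l IH] //=; rewrite in_cons; split.
  by move=> [->|/IH ->]; rewrite ?eqxx ?orbT.
by case/orP => [/eqP ->|/IH]; [left|right].
Qed.

Lemma list_enum_fun (T : Type) (l : seq T) :
  exists k (f : 'I_k -> T), (forall i, List.In (f i) l) /\
                            (forall x, List.In x l -> exists i, f i = x).
Proof.
elim: l => [|y l [k [f [H1 H2]]]].
  by exists 0, (fun i : 'I_0 => False_rect T (ltac:(by case: i))); split=> [[]|].
exists k.+1, (fun i => if unlift ord0 i is Some j then f j else y); split.
  by move=> i; case: unliftP => [j _|_]; [right|left].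
move=> x [<-|/H2 [j <-]]; first by exists ord0; rewrite unlift_none.
by exists (lift ord0 j); rewrite liftK.
Qed.

Lemma In_nth_error (T : Type) (x : T) (l : seq T) :
  List.In x l -> exists j : 'I_(size l), List.nth_error l j = Some x.
Proof.
elim: l => [|y l IH] //= [<-|/IH [j Hj]]; first by exists ord0.
by exists (@Ordinal (size l).+1 j.+1 (ltn_ord j)).
Qed.

Lemma finite_set_sub (T : Type) (P Q : T -> Prop) :
  (forall x, P x -> Q x) -> finite_set Q -> finite_set P.
Proof. by move=> H [l Hl]; exists l => x /H /Hl. Qed.

Lemma finite_set_bigcup (T I : Type) (Q : I -> T -> Prop) (l : seq I) :
  (forall q, List.In q l -> finite_set (Q q)) ->
  finite_set (fun e => exists q, List.In q l /\ Q q e).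
Proof.
elim: l => [|q l IH] H; first by exists nil => e [q []].
have [l1 H1] := H q (or_introl erefl).
have [l2 H2] := IH (fun q' Hq' => H q' (or_intror Hq')).
exists (l1 ++ l2) => e [q' [[<-|Hq'] He]]; apply: List.in_or_app.
  by left; apply: H1.
by right; apply: H2; exists q'.
Qed.

Definition has_at_least (T : Type) (n : nat) (P : T -> Prop) : Prop :=
  exists f : nat -> T, (forall b, b < n -> forall a, a < b -> f a <> f b) /\
                       (forall a, a < n -> P (f a)).

Lemma list_not_has_at_least (T : Type) (l : seq T) :
  ~ has_at_least (size l).+1 (fun x => List.In x l).
Proof.
move=> [f [Hd Hin]].
have H (a : 'I_(size l).+1) : exists j : 'I_(size l), List.nth_error l j = Some (f a).
  by apply: In_nth_error; apply: Hin.
pose idx a := proj1_sig (constructive_indefinite_description _ (H a)).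
have Hidx a : List.nth_error l (idx a) = Some (f a) :=
  proj2_sig (constructive_indefinite_description _ (H a)).
suff /leq_card : injective idx by rewrite !card_ord ltnn.
move=> a b E; have := Hidx a; rewrite E Hidx => -[Efab].
apply/val_inj; case: (ltngtP a b) => // ab.
  by case: (Hd b (ltn_ord b) a ab).
by case: (Hd a (ltn_ord a) b ab).
Qed.

Lemma finite_set_of_not_has_at_least (T : Type) N (P : T -> Prop) :
  ~ has_at_least N.+1 P -> finite_set P.
Proof.
elim: N P => [|N IH] P H.
  exists nil => x Px; apply: H; exists (fun _ => x); split=> // b.
  by rewrite ltnS leqn0 => /eqP -> a.
have [[x Px]|nP] := classic (exists x, P x); last first.
  by exists nil => y Py; apply: nP; exists y.
have [l Hl] : finite_set (fun y => P y /\ y <> x).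
  apply: IH => -[f [Hd Hp]]; apply: H.
  exists (fun a => if a is a'.+1 then f a' else x); split.
    move=> [|b] Hb [|a] Ha //; last exact: Hd.
    by move=> E; apply: (Hp b Hb).2.
  by move=> [|a] Ha //; apply: (Hp a Ha).1.
exists (x :: l) => y Py; have [->|ne] := classic (y = x); [left|right; apply: Hl] => //.
Qed.

Section AlgebraicClosure.
Variables (L : language) (M : structure L).

Fixpoint term_rename (s : nat -> nat) (t : term L) : term L :=
  match t with
  | Var i => Var L (s i)
  | App f ts => App (fun j => term_rename s (ts j))
  end.

Fixpoint formula_rename (s : nat -> nat) (p : formula L) : formula L :=
  match p with
  | FEq t1 t2 => FEq (term_rename s t1) (term_rename s t2)
  | FRel r ts => FRel (fun j => term_rename s (ts j))
  | FBot => FBot L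
  | FNot q => FNot (formula_rename s q)
  | FAnd a b => FAnd (formula_rename s a) (formula_rename s b)
  | FOr a b => FOr (formula_rename s a) (formula_rename s b)
  | FImp a b => FImp (formula_rename s a) (formula_rename s b)
  | FEx x q => FEx (s x) (formula_rename s q)
  | FAll x q => FAll (s x) (formula_rename s q)
  end.

Lemma eval_rename s (v : nat -> M) t :
  eval v (term_rename s t) = eval (v \o s) t.
Proof.
elim: t => [i|f ts IH] //=.
by congr funI; apply: functional_extensionality => j; apply: IH.
Qed.

Lemma upd_comp_inj s (v : nat -> M) x m :
  injective s -> upd v (s x) m \o s = upd (v \o s) x m.
Proof.
by move=> s_inj; apply: functional_extensionality => i; rewrite /upd /= (inj_eq s_inj).
Qed.

Lemma sat_rename s (v : nat -> M) p : injective s ->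
  sat v (formula_rename s p) <-> sat (v \o s) p.
Proof.
move=> s_inj; elim: p v => /=.
- by move=> t1 t2 v; rewrite !eval_rename.
- move=> r ts v.
  suff -> : (fun j => eval v (term_rename s (ts j))) = (fun j => eval (v \o s) (ts j)) by [].
  by apply: functional_extensionality => j; rewrite eval_rename.
- by [].
- by move=> q IH v; rewrite IH.
- by move=> a IHa b IHb v; rewrite IHa IHb.
- by move=> a IHa b IHb v; rewrite IHa IHb.
- by move=> a IHa b IHb v; rewrite IHa IHb.
- move=> x q IH v; split=> -[m Hm]; exists m.
    by rewrite -upd_comp_inj // -IH.
  by rewrite IH upd_comp_inj.
- move=> x q IH v; split=> Hm m.
    by rewrite -upd_comp_inj // -IH.
  by rewrite IH upd_comp_inj.
Qed.

Fixpoint term_bound (t : term L) : nat :=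
  match t with
  | Var i => i.+1
  | App f ts => \max_(j < farity f) term_bound (ts j)
  end.

Fixpoint formula_bound (p : formula L) : nat :=
  match p with
  | FEq a b => maxn (term_bound a) (term_bound b)
  | FRel r ts => \max_(j < rarity r) term_bound (ts j)
  | FBot => 0
  | FNot q => formula_bound q
  | FAnd a b | FOr a b | FImp a b => maxn (formula_bound a) (formula_bound b)
  | FEx _ q | FAll _ q => formula_bound q
  end.

Lemma eval_agree t (v w : nat -> M) :
  (forall i, i < term_bound t -> v i = w i) -> eval v t = eval w t.
Proof.
elim: t => [i|f ts IH] /= H; first exact: H.
congr funI; apply: functional_extensionality => j; apply: IH => i Hi.
by apply: H; apply: leq_trans Hi _; apply: (leq_bigmax (F := fun j => term_bound (ts j)) j).
Qed.

Lemma sat_agree p (v w : nat -> M) :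
  (forall i, i < formula_bound p -> v i = w i) -> sat v p <-> sat w p.
Proof.
elim: p v w => /=.
- move=> t1 t2 v w H.
  rewrite (@eval_agree t1 v w) ?(@eval_agree t2 v w) // => i Hi;
    by apply: H; rewrite leq_max Hi ?orbT.
- move=> r ts v w H.
  suff -> : (fun j => eval v (ts j)) = (fun j => eval w (ts j)) by [].
  apply: functional_extensionality => j; apply: eval_agree => i Hi; apply: H.
  by apply: leq_trans Hi _; apply: (leq_bigmax (F := fun j => term_bound (ts j)) j).
- by [].
- by move=> q IH v w /IH ->.
- move=> a IHa b IHb v w H; rewrite (IHa v w) ?(IHb v w) // => i Hi;
    by apply: H; rewrite leq_max Hi ?orbT.
- move=> a IHa b IHb v w H; rewrite (IHa v w) ?(IHb v w) // => i Hi;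
    by apply: H; rewrite leq_max Hi ?orbT.
- move=> a IHa b IHb v w H; rewrite (IHa v w) ?(IHb v w) // => i Hi;
    by apply: H; rewrite leq_max Hi ?orbT.
- move=> x q IH v w H.
  have E m : sat (upd v x m) q <-> sat (upd w x m) q.
    by apply: IH => i Hi; rewrite /upd; case: eqP => // _; apply: H.
  by split=> -[m Hm]; exists m; apply/E.
- move=> x q IH v w H.
  have E m : sat (upd v x m) q <-> sat (upd w x m) q.
    by apply: IH => i Hi; rewrite /upd; case: eqP => // _; apply: H.
  by split=> Hm m; apply/E.
Qed.

Fixpoint copy_eqs (F : nat) (f : nat -> nat) (n : nat) : formula L :=
  match n with
  | 0 => FNot (FBot L)
  | n.+1 => FAnd (FEq (Var L (F + n)) (Var L (f n))) (copy_eqs F f n)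
  end.

Lemma sat_copy_eqs (v : nat -> M) F f n :
  sat v (copy_eqs F f n) <-> forall i, i < n -> v (F + i) = v (f i).
Proof.
elim: n => [|n IH] /=; first by split=> // _ i.
rewrite IH; split=> [[H1 H2] i|H]; last by split=> [|i Hi]; apply: H; lia.
by rewrite ltnS leq_eqVlt => /orP [/eqP ->|/H2].
Qed.

Fixpoint ex_block (F n : nat) (p : formula L) : formula L :=
  match n with
  | 0 => p
  | n.+1 => FEx (F + n) (ex_block F n p)
  end.

Lemma sat_ex_block (v : nat -> M) F n p :
  sat v (ex_block F n p) <->
  exists w, (forall i, ~ (F <= i < F + n) -> w i = v i) /\ sat w p.
Proof.
elim: n v => [|n IH] v /=.
  split=> [H|[w [Hw H]]]; first by exists v.
  suff -> : v = w by [].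
  by apply: functional_extensionality => i; rewrite Hw //; lia.
split=> [[m /IH [w [Hw H]]]|[w [Hw H]]].
  exists w; split=> // i Hi; rewrite Hw; last lia.
  by rewrite /upd; case: eqP => // E; lia.
exists (w (F + n)); apply/IH; exists w; split=> // i Hi.
by rewrite /upd; case: eqP => [->//|ne]; apply: Hw; lia.
Qed.

Definition expressible (P : (nat -> M) -> Prop) :=
  exists p : formula L, forall v, P v <-> sat v p.

Lemma expressible_ext P Q : expressible P -> (forall v, P v <-> Q v) -> expressible Q.
Proof. by move=> [p Hp] H; exists p => v; rewrite -H. Qed.

Lemma expressible_true : expressible (fun _ => True).
Proof. by exists (FNot (FBot L)) => v; split=> // _ []. Qed.

Lemma expressible_and P Q :
  expressible P -> expressible Q -> expressible (fun v => P v /\ Q v).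
Proof. by move=> [p Hp] [q Hq]; exists (FAnd p q) => v /=; rewrite Hp Hq. Qed.

Lemma expressible_not P : expressible P -> expressible (fun v => ~ P v).
Proof. by move=> [p Hp]; exists (FNot p) => v /=; rewrite Hp. Qed.

Lemma expressible_ex_block F n P : expressible P ->
  expressible (fun v => exists w, (forall i, ~ (F <= i < F + n) -> w i = v i) /\ P w).
Proof.
move=> [p Hp]; exists (ex_block F n p) => v; rewrite sat_ex_block.
by split=> -[w [H1 H2]]; exists w; rewrite Hp in H2 *.
Qed.

(* The renamed formula is evaluated on a fresh block of variables above [F]
   which is then tied to the variables [f i] and quantified away. *)
Lemma expressible_reindex P (f : nat -> nat) :
  expressible P -> expressible (fun v => P (fun i => v (f i))).
Proof.
move=> [p Hp]; set b := formula_bound p; set F := \max_(i < b) (f i).+1.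
have fF i : i < b -> f i < F.
  by move=> Hi; apply: (leq_bigmax (F := fun i : 'I_b => (f i).+1) (Ordinal Hi)).
exists (ex_block F b (FAnd (formula_rename (addn F) p) (copy_eqs F f b))) => v.
rewrite Hp sat_ex_block; split.
- move=> H; exists (fun j => if (F <= j) && (j < F + b) then v (f (j - F)) else v j).
  split=> [i /negP/negbTE -> //|]; split.
    apply/sat_rename; first exact: addnI.
    apply/(sat_agree _).1: H => i Hi /=.
    by rewrite leq_addr /= ltn_add2l Hi; congr (v (f _)); lia.
  apply/sat_copy_eqs => i Hi; rewrite leq_addr /= ltn_add2l Hi /=.
  have := fF i Hi; case: ifP => [/andP [H1 _] H2|_ _]; first lia.
  by congr (v (f _)); lia.
- move=> [w [Hw [/sat_rename H1 /sat_copy_eqs H2]]].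
  apply/(sat_agree _).1: (H1 (@addnI F)) => i Hi /=.
  by rewrite H2 // Hw //; have := fF i Hi; lia.
Qed.

(* Interleave the two valuations on the even and the odd variables. *)
Lemma expressible_ex_valuation (Q : (nat -> M) -> (nat -> M) -> Prop) :
  expressible (fun x => Q (fun i => x i.*2) (fun i => x i.*2.+1)) ->
  expressible (fun v => exists u, Q v u).
Proof.
move=> [p Hp]; set b := formula_bound p.
set s := fun i => if odd i then b + i./2 else i./2.
have [q Hq] := expressible_ex_block b b
  (expressible_reindex s (ex_intro _ p (fun v => iff_refl (sat v p)))).
exists q => v; rewrite -Hq.
set mg := fun (u : nat -> M) i => if odd i then u i./2 else v i./2.
have Emg u : Q v u <-> sat (mg u) p.
  rewrite -Hp /mg.
  have -> : (fun i => if odd i.*2 then u i.*2./2 else v i.*2./2) = v.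
    by apply: functional_extensionality => i; rewrite odd_double doubleK.
  suff -> : (fun i => if odd i.*2.+1 then u i.*2.+1./2 else v i.*2.+1./2) = u by [].
  by apply: functional_extensionality => i; rewrite /= odd_double /= uphalf_double.
have half_lt i : i < b -> i./2 < b.
  by move=> Hi; apply: leq_ltn_trans Hi; rewrite leq_half_double -addnn; lia.
split.
- move=> [u /Emg Hu].
  exists (fun j => if (b <= j) && (j < b + b) then u (j - b) else v j).
  split=> [i /negP/negbTE -> //|].
  apply/(sat_agree _).1: Hu => i /half_lt Hi; rewrite /mg /s.
  case: (odd i); first by rewrite leq_addr /= ltn_add2l Hi addKn.
  by case: ifP => // /andP [H _]; lia.
- move=> [y [Hy Hs]]; exists (fun j => y (b + j)); apply/Emg.
  apply/(sat_agree _).1: Hs => i /half_lt Hi.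
  by rewrite /mg /s; case: (odd i) => //; rewrite Hy //; lia.
Qed.

Lemma expressible_forall_lt (P : nat -> (nat -> M) -> Prop) n :
  (forall a, expressible (P a)) -> expressible (fun v => forall a, a < n -> P a v).
Proof.
move=> HP; elim: n => [|n IH].
  by apply: expressible_ext expressible_true _ => v; split=> // _ a.
apply: expressible_ext (expressible_and (HP n) IH) _ => v; split.
  by move=> [H1 H2] a; rewrite ltnS leq_eqVlt => /orP [/eqP ->|/H2].
by move=> H; split=> [|a Ha]; apply: H; lia.
Qed.

Lemma expressible_forall_in (T : Type) (P : T -> (nat -> M) -> Prop) (l : seq T) :
  (forall a, expressible (P a)) -> expressible (fun v => forall a, List.In a l -> P a v).
Proof.
move=> HP; elim: l => [|x l IH].
  by apply: expressible_ext expressible_true _ => v; split=> // _ a.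
apply: expressible_ext (expressible_and (HP x) IH) _ => v /=; split.
  by move=> [H1 H2] a [<-|/H2].
by move=> H; split=> [|a Ha]; apply: H; [left|right].
Qed.

Lemma Meq_class_eq (s : eqsort M) (c1 c2 : ('I_(es_n s) -> M) -> Prop) h1 h2 :
  c1 = c2 -> (existT _ s (exist _ c1 h1) : Meq M) = existT _ s (exist _ c2 h2).
Proof. by move=> E; subst; rewrite (proof_irrelevance _ h1 h2). Qed.

Lemma cls_eqE (s : eqsort M) (x y : 'I_(es_n s) -> M) : cls x = cls y <-> es_E x y.
Proof.
split=> [E|xy].
  by have /= -> := f_equal (@proj1_sig _ _) (inj_pair2 _ _ _ _ _ E); apply: es_refl.
apply: Meq_class_eq; apply: functional_extensionality => z.
by apply: propositional_extensionality; split; apply: es_trans; [apply: es_sym|].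
Qed.

Lemma cls_surj (e : Meq M) : exists x, e = @cls _ _ (sort_of e) x.
Proof.
case: e => s [c [x Hx]]; exists x; apply: Meq_class_eq.
by apply: functional_extensionality => z; apply: propositional_extensionality.
Qed.

Lemma expressible_es_E (s : eqsort M) (f g : nat -> nat) :
  expressible (fun v => @es_E _ _ s (fun i => v (f i)) (fun i => v (g i))).
Proof.
have [phi Hphi] := es_def s; set n := es_n s.
have base : expressible (fun v => @es_E _ _ s (fun i => v (0 + i)) (fun i => v (n + i))).
  exists phi => v; rewrite (Hphi _ _ v).
  suff -> : Defs.tval (fun i : 'I_n => v (0 + i)) 0
              (Defs.tval (fun i : 'I_n => v (n + i)) n v) = v by [].
  apply: functional_extensionality => i; rewrite /Defs.tval leq0n subn0.
  case: insubP => [j _ -> //|_]; case: ifP => // Hni.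
  by case: insubP => [j _ ->|_] //; rewrite subnKC.
apply: expressible_ext
  (expressible_reindex (fun j => if j < n then f j else g (j - n)) base) _ => v.
have -> : (fun i : 'I_n => v (if 0 + i < n then f (0 + i) else g (0 + i - n)))
          = (fun i => v (f i)).
  by apply: functional_extensionality => i; rewrite add0n ltn_ord.
suff -> : (fun i : 'I_n => v (if n + i < n then f (n + i) else g (n + i - n)))
          = (fun i => v (g i)) by [].
by apply: functional_extensionality => i; rewrite ltnNge leq_addr /= addKn.
Qed.

Lemma rep_at_equiv (v w : nat -> M) o o' (e : Meq M) :
  rep_at v o e -> rep_at w o' e ->
  @es_E _ _ (sort_of e) (fun i => v (o + i)) (fun i => w (o' + i)).
Proof. by rewrite /rep_at => H1 H2; apply/cls_eqE; rewrite H1 H2. Qed.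

Lemma rep_at_of_equiv (s : eqsort M) (v w : nat -> M) o o' (e : Meq M) :
  sort_of e = s -> rep_at v o e ->
  @es_E _ _ s (fun i => w (o' + i)) (fun i => v (o + i)) -> rep_at w o' e.
Proof.
by case: e => s' c /= <- H1 H2; rewrite /rep_at -H1 /=; apply/cls_eqE.
Qed.

Lemma rep_at_inj (v : nat -> M) o (e1 e2 : Meq M) :
  rep_at v o e1 -> rep_at v o e2 -> sort_of e1 = sort_of e2 -> e1 = e2.
Proof. by case: e1 => s1 c1; case: e2 => s2 c2 /= H1 H2 Hs; subst s2; rewrite -H1 -H2. Qed.

Lemma rep_at_real (v : nat -> M) o b : rep_at v o (real b) <-> v o = b.
Proof.
rewrite /rep_at /real; split=> [/(@cls_eqE (home_sort M)) /= /(f_equal (fun f => f ord0))|H].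
  by rewrite addn0.
apply/(@cls_eqE (home_sort M)); rewrite /=.
by apply: functional_extensionality => i; rewrite (ord1 i) addn0.
Qed.

Lemma real_inj : injective (@real _ M).
Proof. by move=> a b E; apply/(rep_at_real (fun _ => a) 0); rewrite -E; apply/rep_at_real. Qed.

Lemma home_sort_real (e : Meq M) : sort_of e = home_sort M -> exists b, e = real b.
Proof.
case: e => s c /= Hs; subst s.
have [x ->] := cls_surj (existT _ (home_sort M) c); exists (x ord0); apply/cls_eqE => /=.
by apply: functional_extensionality => i; rewrite (ord1 i).
Qed.

Definition def_eq_list (C : Meq M -> Prop) (s : eqsort M) (X : Meq M -> Prop) :=
  exists (ps : seq (Meq M * nat)) (Phi : (nat -> M) -> Prop),
    expressible Phi /\ (forall q, List.In q ps -> C q.1) /\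
    forall e, X e <-> (sort_of e = s /\ exists v, rep_at v 0 e /\
        (forall q, List.In q ps -> rep_at v q.2 q.1) /\ Phi v).

Lemma def_eqP C s X : def_eq C s X <-> def_eq_list C s X.
Proof.
split.
- move=> [phi [k [p [o [Hp HX]]]]].
  have Hin q : List.In q (List.map (fun i => (p i, o i)) (enum 'I_k)) <->
               exists i, q = (p i, o i).
    rewrite List.in_map_iff; split=> [[i [<- _]]|[i ->]]; first by exists i.
    by exists i; split=> //; apply/In_mem; rewrite mem_enum.
  exists (List.map (fun i => (p i, o i)) (enum 'I_k)), (fun v => sat v phi).
  split; first by exists phi.
  split=> [q /Hin [i ->]|e]; first exact: Hp.
  rewrite HX; split=> -[Hs [v [H1 [H2 H3]]]]; split=> //; exists v; split=> //.
    by split=> // q /Hin [i ->]; apply: H2.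
  by split=> // i; apply: (H2 (p i, o i)); apply/Hin; exists i.
- move=> [ps [Phi [[phi Hphi] [HC HX]]]].
  have [k [f [Hf1 Hf2]]] := list_enum_fun ps.
  exists phi, k, (fun i => (f i).1), (fun i => (f i).2); split=> [i|e]; first exact: HC.
  rewrite HX; split=> -[Hs [v [H1 [H2 H3]]]]; split=> //; exists v; split=> //.
    by split=> [i|]; [apply: H2|rewrite -Hphi].
  by split=> [q /Hf2 [i <-]|]; [apply: H2|rewrite Hphi].
Qed.

Lemma acleqS (C C' : Meq M -> Prop) x :
  (forall a, C a -> C' a) -> acleq C x -> acleq C' x.
Proof.
move=> H [X [[phi [k [p [o [Hp HX]]]]] HXx]].
by exists X; split=> //; exists phi, k, p, o; split=> // i; apply: H.
Qed.

Lemma split_params (A : Meq M -> Prop) (p : Meq M) (ps : seq (Meq M * nat)) :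
  (forall q, List.In q ps -> A q.1 \/ q.1 = p) ->
  exists psA psP,
    (forall q, List.In q ps -> List.In q psA \/ (q.1 = p /\ List.In q.2 psP)) /\
    (forall q, List.In q psA -> List.In q ps /\ A q.1) /\
    (forall o, List.In o psP -> List.In (p, o) ps).
Proof.
elim: ps => [|[e o] ps IH] H; first by exists nil, nil.
have [psA [psP [H1 [H2 H3]]]] := IH (fun q' Hq' => H q' (or_intror Hq')).
have [Ae|nAe] := classic (A e).
  exists ((e, o) :: psA), psP; split=> [q' /= [<-|/H1 [Hq'|Hq']]|].
  - by left; left.
  - by left; right.
  - by right.
  split=> [q' /= [<-|/H2 [? ?]]|o' /H3]; by [split=> //; left|split=> //; right|right].
have Ep : e = p by case: (H (e, o) (or_introl erefl)).
subst e; exists psA, (o :: psP); split=> [q' /= [<-|/H1 [Hq'|[Hq'1 Hq'2]]]|].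
- by right; split=> //; left.
- by left.
- by right; split=> //; right.
split=> [q' /H2 [? ?]|o' /= [<-|/H3]]; by [split=> //; right|left|right].
Qed.

Definition params_bound (ps : seq (Meq M * nat)) :=
  foldr (fun q m => maxn (q.2 + es_n (sort_of q.1)) m) 0 ps.

Lemma params_bound_ge ps q : List.In q ps -> q.2 + es_n (sort_of q.1) <= params_bound ps.
Proof.
elim: ps => //= q' ps IH [->|/IH H]; first by rewrite leq_max leqnn.
by rewrite leq_max H orbT.
Qed.

(* [cut_set] is [Z], written over explicit valuations:
   [V] carries the parameters from [A], those of [Psi] being shifted above
   [S]; [u] represents [p'] and [w] an element of [X_{p'}]. *)
Section Cut.
Variables (A : Meq M -> Prop) (s sp : eqsort M).
Variables (psA : seq (Meq M * nat)) (psP : seq nat) (Phi : (nat -> M) -> Prop).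
Variables (psY : seq (Meq M * nat)) (Psi : (nat -> M) -> Prop) (S N : nat).

(* [N.+1] valuations are packed into one, the [a]-th occupying the variables
   congruent to [a] modulo [N.+1]. *)
Definition unpack (W : nat -> M) (a : nat) : nat -> M := fun j => W (j * N.+1 + a).

Definition fiber_witness (V u w : nat -> M) :=
  (forall q, List.In q psA ->
     @es_E _ _ (sort_of q.1) (fun i => w (q.2 + i)) (fun i => V (q.2 + i))) /\
  (forall o, List.In o psP -> @es_E _ _ sp (fun i => w (o + i)) (fun i => u (0 + i))) /\
  Phi w.

Definition cut_formula (V : nat -> M) := exists u, Psi u /\
  (forall q, List.In q psY ->
     @es_E _ _ (sort_of q.1) (fun i => u (q.2 + i)) (fun i => V (S + q.2 + i))) /\
  (exists w, @es_E _ _ s (fun i => w (0 + i)) (fun i => V (0 + i)) /\ fiber_witness V u w) /\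
  ~ (exists W, (forall b, b < N.+1 -> forall a, a < b ->
        ~ @es_E _ _ s (fun i => unpack W a (0 + i)) (fun i => unpack W b (0 + i))) /\
      (forall a, a < N.+1 -> fiber_witness V u (unpack W a))).

Hypotheses (HPhi : expressible Phi) (HPsi : expressible Psi).

Lemma fiber_witness_expressible (fV fu fw : nat -> nat) :
  expressible (fun y =>
    fiber_witness (fun i => y (fV i)) (fun i => y (fu i)) (fun i => y (fw i))).
Proof.
apply: expressible_and; [|apply: expressible_and].
- apply: expressible_forall_in => q.
  exact: (expressible_es_E (sort_of q.1) (fun i => fw (q.2 + i)) (fun i => fV (q.2 + i))).
- apply: expressible_forall_in => o.
  exact: (expressible_es_E sp (fun i => fw (o + i)) (fun i => fu (0 + i))).
- exact: (expressible_reindex fw HPhi).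
Qed.

Lemma cut_formula_expressible : expressible cut_formula.
Proof.
apply: expressible_ex_valuation; apply: expressible_and.
  exact: (expressible_reindex (fun i => i.*2.+1) HPsi).
apply: expressible_and.
  apply: expressible_forall_in => q.
  exact: (expressible_es_E (sort_of q.1) (fun i => (q.2 + i).*2.+1) (fun i => (S + q.2 + i).*2)).
apply: expressible_and.
  apply: expressible_ex_valuation; apply: expressible_and.
    exact: (expressible_es_E s (fun i => (0 + i).*2.+1) (fun i => (0 + i).*2.*2)).
  exact: (fiber_witness_expressible (fun i => i.*2.*2) (fun i => i.*2.+1.*2) (fun i => i.*2.+1)).
apply: expressible_not; apply: expressible_ex_valuation; apply: expressible_and.
  apply: expressible_forall_lt => b; apply: expressible_forall_lt => a; apply: expressible_not.
  exact: (expressible_es_E s (fun i => ((0 + i) * N.+1 + a).*2.+1)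
                             (fun i => ((0 + i) * N.+1 + b).*2.+1)).
apply: expressible_forall_lt => a.
exact: (fiber_witness_expressible (fun i => i.*2.*2) (fun i => i.*2.+1.*2)
                                  (fun i => (i * N.+1 + a).*2.+1)).
Qed.

Definition cut_params := psA ++ List.map (fun q => (q.1, S + q.2)) psY.

Definition cut_set (e : Meq M) := sort_of e = s /\ exists V, rep_at V 0 e /\
  (forall q, List.In q cut_params -> rep_at V q.2 q.1) /\ cut_formula V.

Lemma cut_set_def :
  (forall q, List.In q psA -> A q.1) -> (forall q, List.In q psY -> A q.1) ->
  def_eq A s cut_set.
Proof.
move=> HA HY; apply/def_eqP; exists cut_params, cut_formula.
split; first exact: cut_formula_expressible.
split=> // q Hq; case: (List.in_app_or _ _ _ Hq) => [/HA //|].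
by move=> /List.in_map_iff [q' [<- /HY]].
Qed.

Definition fiber (p e : Meq M) := sort_of e = s /\ exists w, rep_at w 0 e /\
  (forall q, List.In q psA -> rep_at w q.2 q.1) /\
  (forall o, List.In o psP -> rep_at w o p) /\ Phi w.

Lemma unpack_pack (wa : nat -> nat -> M) a :
  a < N.+1 -> unpack (fun j => wa (j %% N.+1) (j %/ N.+1)) a = wa a.
Proof.
move=> Ha; apply: functional_extensionality => j.
by rewrite /unpack modnMDl modn_small // divnMDl // divn_small // addn0.
Qed.

Lemma has_at_least_fiber_packed V u :
  (forall q, List.In q psA -> rep_at V q.2 q.1) ->
  has_at_least N.+1 (fiber (@cls _ _ sp (fun i => u (0 + i)))) ->
  exists W, (forall b, b < N.+1 -> forall a, a < b ->
        ~ @es_E _ _ s (fun i => unpack W a (0 + i)) (fun i => unpack W b (0 + i))) /\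
      (forall a, a < N.+1 -> fiber_witness V u (unpack W a)).
Proof.
move=> HVA [f [Hd Hf]]; set p := @cls _ _ sp (fun i => u (0 + i)) in Hf *.
have Hw a : exists w, a < N.+1 ->
    rep_at w 0 (f a) /\ (forall q, List.In q psA -> rep_at w q.2 q.1) /\
    (forall o, List.In o psP -> rep_at w o p) /\ Phi w.
  have [Ha|Ha] := ltnP a N.+1; last by exists V => H; lia.
  by have [_ [w Hw]] := Hf a Ha; exists w.
pose wa a := proj1_sig (constructive_indefinite_description _ (Hw a)).
have Hwa a : a < N.+1 -> _ := proj2_sig (constructive_indefinite_description _ (Hw a)).
exists (fun j => wa (j %% N.+1) (j %/ N.+1)); split=> [b Hb a Hab|a Ha].
  have Ha : a < N.+1 by apply: ltn_trans Hb.
  rewrite !unpack_pack // => Eab; apply: (Hd b Hb a Hab).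
  have [[Hfa _] [Hfb _]] := (Hf a Ha, Hf b Hb).
  have [[Ra _] [Rb _]] := (Hwa a Ha, Hwa b Hb).
  by apply: (rep_at_inj Ra); [apply: (rep_at_of_equiv Hfb Rb)|rewrite Hfa Hfb].
have [_ [RA [RP RPhi]]] := Hwa a Ha; rewrite unpack_pack //.
split=> [q Hq|]; first exact: (rep_at_equiv (RA q Hq) (HVA q Hq)).
by split=> // o Ho; apply/cls_eqE; apply: RP.
Qed.

Section Finiteness.
Variable Y : Meq M -> Prop.
Hypothesis HY : forall u, Psi u -> (forall q, List.In q psY -> rep_at u q.2 q.1) ->
  Y (@cls _ _ sp (fun i => u (0 + i))).

Lemma cut_set_fiber e :
  cut_set e -> exists p, Y p /\ fiber p e /\ ~ has_at_least N.+1 (fiber p).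
Proof.
move=> [Hs [V [HV0 [HVZ [u [HPsiu [Hu' [[w [Hw0 [HwA [HwP HwPhi]]]] HnW]]]]]]]].
have HVA q : List.In q psA -> rep_at V q.2 q.1.
  by move=> Hq; apply: HVZ; apply: List.in_or_app; left.
have HVS q : List.In q psY -> rep_at V (S + q.2) q.1.
  move=> Hq; apply: (HVZ (q.1, S + q.2)); apply: List.in_or_app; right.
  exact: List.in_map.
exists (@cls _ _ sp (fun i => u (0 + i))); split.
  apply: HY => // q Hq; exact: (rep_at_of_equiv erefl (HVS q Hq) (Hu' q Hq)).
split; last by move/(has_at_least_fiber_packed HVA).
split=> //; exists w; split; first exact: (rep_at_of_equiv Hs HV0 Hw0).
split=> [q Hq|]; first exact: (rep_at_of_equiv erefl (HVA q Hq) (HwA q Hq)).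
by split=> // o Ho; apply/cls_eqE; apply: HwP.
Qed.

Lemma cut_set_finite : finite_set Y -> finite_set cut_set.
Proof.
move=> [lY HlY].
apply: (finite_set_sub (Q := fun e => exists p,
  List.In p lY /\ fiber p e /\ ~ has_at_least N.+1 (fiber p))).
  by move=> e /cut_set_fiber [p [/HlY Hp Hpe]]; exists p.
apply: finite_set_bigcup => p _; apply: finite_set_of_not_has_at_least => -[f [Hd Hf]].
have [_ HB] := Hf 0 (ltn0Sn _); apply: HB; exists f.
by split=> [|a /Hf []].
Qed.

End Finiteness.

Section Membership.
Variables (p : Meq M) (ps : seq (Meq M * nat)) (X : Meq M -> Prop).
Hypothesis HX : forall e, X e <-> (sort_of e = s /\ exists v, rep_at v 0 e /\
  (forall q, List.In q ps -> rep_at v q.2 q.1) /\ Phi v).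
Hypothesis Hsplit : forall q, List.In q ps ->
  List.In q psA \/ (q.1 = p /\ List.In q.2 psP).
Hypothesis HpsA : forall q, List.In q psA -> List.In q ps.
Hypothesis HpsP : forall o, List.In o psP -> List.In (p, o) ps.
Hypothesis Hsp : sort_of p = sp.

Lemma fiber_witness_mem V u w :
  (forall q, List.In q psA -> rep_at V q.2 q.1) -> rep_at u 0 p ->
  fiber_witness V u w -> X (@cls _ _ s (fun i => w (0 + i))).
Proof.
move=> HVA Hu [HwA [HwP HwPhi]]; apply/HX; split=> //; exists w; do 2!split=> //.
move=> q /Hsplit [Hq|[Eq Ho]]; first exact: (rep_at_of_equiv erefl (HVA q Hq) (HwA q Hq)).
by case: q Eq Ho => q1 q2 /= -> Ho; apply: (rep_at_of_equiv Hsp Hu (HwP q2 Ho)).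
Qed.

(* [V] juxtaposes a representation [v0] of [x] over [A, p] with a
   representation [u0] of [p] over [A], the latter shifted above [S]. *)
Lemma mem_cut_set x lX :
  sort_of x = s -> X x -> (forall e, X e -> List.In e lX) -> N = size lX ->
  es_n s <= S -> params_bound ps <= S ->
  (exists u0, rep_at u0 0 p /\ (forall q, List.In q psY -> rep_at u0 q.2 q.1) /\ Psi u0) ->
  cut_set x.
Proof.
move=> Hs Xx HlX HN HSs HSps [u0 [Hu00 [Hu0ps Hu0Psi]]].
have [_ [v0 [Hv00 [Hv0ps Hv0Phi]]]] := (HX x).1 Xx.
pose V j := if j < S then v0 j else u0 (j - S).
have Vlow j : j < S -> V j = v0 j by move=> Hj; rewrite /V Hj.
have blkV q : List.In q ps ->
    (fun i : 'I_(es_n (sort_of q.1)) => V (q.2 + i)) = (fun i => v0 (q.2 + i)).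
  move=> Hq; apply: functional_extensionality => i; apply: Vlow.
  by have := params_bound_ge Hq; have := ltn_ord i; lia.
have blkV0 : (fun i : 'I_(es_n (sort_of x)) => V (0 + i)) = (fun i => v0 (0 + i)).
  apply: functional_extensionality => i; apply: Vlow.
  have : es_n (sort_of x) = es_n s by rewrite Hs.
  by have := ltn_ord i; lia.
have blkVS (q : Meq M * nat) :
    (fun i : 'I_(es_n (sort_of q.1)) => V (S + q.2 + i)) = (fun i => u0 (q.2 + i)).
  by apply: functional_extensionality => i; rewrite /V -addnA ltnNge leq_addr /= addKn.
have repVA q : List.In q psA -> rep_at V q.2 q.1.
  by move=> /HpsA Hq; rewrite /rep_at blkV //; apply: Hv0ps.
split=> //; exists V; split; first by rewrite /rep_at blkV0.
split=> [q Hq|].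
  case: (List.in_app_or _ _ _ Hq) => [/repVA //|/List.in_map_iff [q' [<- Hq']]].
  by rewrite /rep_at /= blkVS; apply: Hu0ps.
exists u0; split=> //; split=> [q Hq|]; first by rewrite blkVS; apply: es_refl.
split.
  exists v0; split; first by rewrite -Hs blkV0; apply: es_refl.
  split=> [q /HpsA Hq|]; first by rewrite blkV //; apply: es_refl.
  by split=> // o Ho; rewrite -Hsp; apply: (rep_at_equiv (Hv0ps _ (HpsP Ho)) Hu00).
(* [N.+1] pairwise inequivalent witnesses would give [N.+1] elements of [X]. *)
move=> [W [Hd HC]]; apply: (@list_not_has_at_least _ lX); rewrite -HN.
exists (fun a => @cls _ _ s (fun i => unpack W a (0 + i))); split.
  by move=> b Hb a Hab /cls_eqE; apply: Hd.
by move=> a Ha; apply: HlX; apply: (fiber_witness_mem repVA Hu00 (HC a Ha)).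
Qed.

End Membership.

End Cut.

Lemma acleq_cut (A : Meq M -> Prop) (p x : Meq M) :
  acleq (union A (fun f => f = p)) x -> acleq A p -> acleq A x.
Proof.
move=> [X [/def_eqP [ps [Phi [HPhi [HpsAp HX]]]] [Xx [lX HlX]]]].
move=> [Y [/def_eqP [psY [Psi [HPsi [HpsY HY]]]] [Yp Yfin]]].
have [psA [psP [Hsplit [HpsA HpsP]]]] := split_params HpsAp.
set S := maxn (es_n (sort_of x)) (params_bound ps).
exists (cut_set (sort_of x) (sort_of p) psA psP Phi psY Psi S (size lX)); split; [|split].
- by apply: cut_set_def => // q /HpsA [].
- apply: (mem_cut_set HX Hsplit (fun q Hq => (HpsA q Hq).1) HpsP erefl erefl Xx HlX erefl).
  + exact: leq_maxl.
  + exact: leq_maxr.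
  + by have [_ [u0 Hu0]] := (HY p).1 Yp; exists u0.
- by apply: cut_set_finite Yfin => u Hu HuY; apply/HY; split=> //; exists u.
Qed.

Lemma acleq_cut_list (A : Meq M -> Prop) (Ps : seq (Meq M)) x :
  (forall p, List.In p Ps -> acleq A p) ->
  acleq (union A (fun f => List.In f Ps)) x -> acleq A x.
Proof.
elim: Ps x => [|p Ps IH] x HP H; first by apply: acleqS H => a [|[]].
apply: (IH x (fun p' Hp' => HP p' (or_intror Hp'))).
apply: (@acleq_cut _ p).
  by apply: acleqS H => a [Ha|[<-|Ha]]; [left; left|right|left; right].
by apply: acleqS (HP p (or_introl erefl)) => a Ha; left.
Qed.

Lemma acleq_trans (A B : Meq M -> Prop) x :
  (forall b, B b -> acleq A b) -> acleq B x -> acleq A x.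
Proof.
move=> HB [X [[phi [k [p [o [Hp HX]]]]] HXx]].
apply: (@acleq_cut_list A (List.map p (enum 'I_k))).
  by move=> b /List.in_map_iff [i [<- _]]; apply: HB.
exists X; split=> //; exists phi, k, p, o; split=> // i; right.
by apply: List.in_map; apply/In_mem; rewrite mem_enum.
Qed.

Definition real_image (S : M -> Prop) : Meq M -> Prop :=
  fun f => exists b, S b /\ f = real b.

Lemma finite_real_preimage (l : seq (Meq M)) :
  exists l' : seq M, forall c, List.In (real c) l -> List.In c l'.
Proof.
elim: l => [|e l [l' Hl']]; first by exists nil.
have [[c ->]|ne] := classic (exists c, e = real c).
  by exists (c :: l') => c' /= [/real_inj ->|/Hl' H]; [left|right].
by exists l' => c' /= [E|/Hl' //]; case: ne; exists c'.
Qed.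

Lemma acleq_real (S : M -> Prop) a : acleq (real_image S) (real a) <-> acl S a.
Proof.
split.
- move=> [X [[phi [k [p [o [Hp HX]]]]] [HXa [l Hl]]]].
  pose b i := proj1_sig (constructive_indefinite_description _ (Hp i)).
  have Hb i : S (b i) /\ p i = real (b i) :=
    proj2_sig (constructive_indefinite_description _ (Hp i)).
  exists (fun c => X (real c)); split; last split=> //.
    exists phi, k, b, o; split=> [i|c]; first by case: (Hb i).
    rewrite HX; split=> [[_ [v [H1 [H2 H3]]]]|[v [H1 [H2 H3]]]].
      exists v; split; first exact/rep_at_real.
      by split=> // i; have := H2 i; case: (Hb i) => _ -> /rep_at_real.
    split=> //; exists v; split; first exact/rep_at_real.
    by split=> // i; case: (Hb i) => _ ->; apply/rep_at_real.
  have [l' Hl'] := finite_real_preimage l; exists l' => c Hc; apply: Hl'; exact: Hl.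
- move=> [X [[phi [k [p [o [Hp HX]]]]] [HXa [l Hl]]]].
  exists (real_image X); split; last split; last first.
  + exists (List.map (@real _ M) l) => e [c [Hc ->]]; apply: List.in_map; exact: Hl.
  + by exists a.
  exists phi, k, (fun i => real (p i)), o; split=> [i|e]; first by exists (p i).
  split=> [[c [/HX [v [H1 [H2 H3]]] ->]]|[Hs [v [H1 [H2 H3]]]]].
    split=> //; exists v; split; first exact/rep_at_real.
    by split=> // i; apply/rep_at_real.
  have [c Ec] := home_sort_real Hs; subst e; exists c; split=> //; apply/HX.
  exists v; split; first exact/rep_at_real.
  by split=> // i; apply/rep_at_real.
Qed.

Lemma gimg_union (g : Meq M -> seq M) (A C : Meq M -> Prop) :
  gimg g (union A C) = union (gimg g A) (gimg g C).
Proof.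
apply: functional_extensionality => a; apply: propositional_extensionality.
split=> [[e [[HA|HC] Ha]]|[[e [HA Ha]]|[e [HC Ha]]]].
- by left; exists e.
- by right; exists e.
- by exists e; split=> //; left.
- by exists e; split=> //; right.
Qed.

Lemma gimgS (g : Meq M -> seq M) (A B : Meq M -> Prop) :
  (forall e, A e -> B e) -> forall a, gimg g A a -> gimg g B a.
Proof. by move=> AB a [e [/AB Be Ha]]; exists e. Qed.

Section CanonicalParameters.
Variable g : Meq M -> seq M.
Hypothesis g_param : forall e, geom_can_param (g e) e.
Hypothesis g_real : forall a, g (real a) = [:: a].

Lemma acleq_can_param C e : acleq C e <-> forall a, List.In a (g e) -> acleq C (real a).
Proof.
split=> [H a Ha|H].
  by apply: (acleq_trans _ ((g_param e).1 a Ha)) => b ->.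
by apply: (acleq_trans _ (g_param e).2) => b [a [Ha ->]]; apply: H.
Qed.

Lemma acleq_gimg D e : acleq D e <-> forall a, List.In a (g e) -> acl (gimg g D) a.
Proof.
have -> : acleq D e <-> acleq (real_image (gimg g D)) e.
  split; apply: acleq_trans.
    move=> d Hd; apply: acleqS (g_param d).2 => f [a [Ha ->]].
    by exists a; split=> //; exists d.
  move=> f [a [[d [Hd Ha]] ->]].
  by apply: acleqS ((g_param d).1 a Ha) => b ->.
by rewrite acleq_can_param; split=> H a /H /acleq_real.
Qed.

Lemma acleq_gimg_real D a : acleq D (real a) <-> acl (gimg g D) a.
Proof. by rewrite acleq_gimg g_real; split=> [|H b [<-|[]]]; [apply; left|]. Qed.

Lemma gimg_real_image X : gimg g (real_image X) = X.
Proof.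
apply: functional_extensionality => a; apply: propositional_extensionality.
split=> [[e [[b [Hb ->]]]]|Ha]; first by rewrite g_real => -[<-|[]].
by exists (real a); split; [exists a|rewrite g_real; left].
Qed.

Lemma indep_eq_gimg A B C :
  indep_eq A B C <-> indep_real (gimg g A) (gimg g B) (gimg g C).
Proof.
split=> H y.
  by rewrite -!gimg_union -!acleq_gimg_real; apply: H.
rewrite !acleq_gimg !gimg_union; split=> [[H1 H2] b Hb|H3].
  by apply/(H b); split; [apply: H1|apply: H2].
by split=> b Hb; have [] := (H b).2 (H3 b Hb).
Qed.

Lemma modular_eq_of_real : modular_real M -> modular_eq M.
Proof.
move=> Hm A B C D DC CB; rewrite !indep_eq_gimg.
by apply: Hm; apply: gimgS.
Qed.

(* Real sets are the [gimg] images of their copies in [M^eq]. *)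
Lemma modular_real_of_eq : modular_eq M -> modular_real M.
Proof.
move=> Hm A B C D DC CB.
rewrite -(gimg_real_image A) -(gimg_real_image B) -(gimg_real_image C) -(gimg_real_image D).
rewrite -!indep_eq_gimg; apply: Hm => _ [a [Ha ->]]; exists a; split=> //.
  exact: DC.
exact: CB.
Qed.

End CanonicalParameters.

End AlgebraicClosure.

Theorem lemma7p11 (L : language) (M : structure L) (g : Meq M -> list M) :
  geom_EI M ->
  (forall e, geom_can_param (g e) e) ->
  (forall a : M, g (real a) = a :: nil) ->
  (forall A B C : Meq M -> Prop,
      indep_eq A B C <-> indep_real (gimg g A) (gimg g B) (gimg g C)) /\
  (modular_real M <-> modular_eq M).
Proof.
move=> _ g_param g_real; split; first exact: indep_eq_gimg.
by split; [apply: modular_eq_of_real|apply: modular_real_of_eq].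
Qed.
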